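(* Let $(m_i,e_i)\in M\times\mathbb{Z}$, $i=1,\dots,r$, with $m_1,\dots,m_r$ nonzero and generating the lattice $M$. Let $\omega=\operatorname{Cone}(m_1,\dots,m_r)$ and $\Delta=\{v\in N_{\mathbb{Q}}:\langle m_i,v\rangle\ge-e_i,\ i=1,\dots,r\}$. Let $L=\mathbb{Q}_{\ge0}m\subset\omega$ be a ray with primitive lattice vector $m$. Let $p:\mathbb{Q}^r\to M_{\mathbb{Q}}$ be the linear map sending the $i$-th standard basis vector to $m_i$, let $\mathscr{H}_L$ be the Hilbert basis (in $\mathbb{Z}^r$) of the cone $p^{-1}(L)\cap\mathbb{Q}_{\ge0}^r$, and $\mathscr{H}_L^*=\{s\in\mathscr{H}_L: \sum_is_im_i\ne0\}$; for $s\in\mathscr{H}_L^*$ let $\lambda(s)\in\mathbb{Z}_{>0}$ be defined by $\sum_is_im_i=\lambda(s)m$. Then $\min_{v\in\Delta}\langle m,v\rangle=-\min_{s\in\mathscr{H}_L^*}\frac{\sum_{i=1}^rs_ie_i}{\lambda(s)}$.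
   Context: $M,N$ are dual lattices of finite rank with associated $\mathbb{Q}$-vector spaces $M_{\mathbb{Q}},N_{\mathbb{Q}}$. The Hilbert basis of a strongly convex rational polyhedral cone is the unique minimal generating set of the monoid of its lattice points. *)

(* M = Z^n as 'rV[int]_n, N_Q = Q^n as 'rV[rat]_n,
   Z^r as 'rV[int]_r. *)
From HB Require Import structures.
From mathcomp Require Import all_boot all_order all_algebra.
Set Implicit Arguments. Unset Strict Implicit. Unset Printing Implicit Defensive.
Import Order.TTheory GRing.Theory Num.Theory.
Local Open Scope ring_scope.

Definition toQ (n : nat) (x : 'rV[int]_n) : 'rV[rat]_n :=
  map_mx (fun z : int => (z%:~R : rat)) x.

Definition pair (n : nat) (m : 'rV[int]_n) (v : 'rV[rat]_n) : rat :=
  \sum_(j < n) (m 0 j)%:~R * v 0 j.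

Definition generates_lattice (n r : nat) (ms : 'I_r -> 'rV[int]_n) : Prop :=
  forall x : 'rV[int]_n, exists c : 'I_r -> int, x = \sum_(i < r) c i *: ms i.

Definition primitive (n : nat) (m : 'rV[int]_n) : Prop :=
  m != 0 /\ forall (k : int) (m' : 'rV[int]_n), m = k *: m' -> k = 1 \/ k = -1.

Definition in_cone (n r : nat) (ms : 'I_r -> 'rV[int]_n) (m : 'rV[int]_n) : Prop :=
  exists a : 'I_r -> rat, (forall i, 0 <= a i) /\
    toQ m = \sum_(i < r) a i *: toQ (ms i).

Definition in_Delta (n r : nat) (ms : 'I_r -> 'rV[int]_n) (es : 'I_r -> int)
  (v : 'rV[rat]_n) : Prop :=
  forall i, - ((es i)%:~R : rat) <= pair (ms i) v.

Definition pZ (n r : nat) (ms : 'I_r -> 'rV[int]_n) (s : 'rV[int]_r) : 'rV[int]_n :=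
  \sum_(i < r) s 0 i *: ms i.

Definition sdot (r : nat) (s : 'rV[int]_r) (es : 'I_r -> int) : int :=
  \sum_(i < r) s 0 i * es i.

Definition ray_monoid (n r : nat) (ms : 'I_r -> 'rV[int]_n) (m : 'rV[int]_n)
  (s : 'rV[int]_r) : Prop :=
  (forall i, 0 <= s 0 i) /\
  exists t : rat, 0 <= t /\ toQ (pZ ms s) = t *: toQ m.

Definition gen_monoid (r : nat) (H : 'rV[int]_r -> Prop) (x : 'rV[int]_r) : Prop :=
  exists c : seq 'rV[int]_r, (forall h, h \in c -> H h) /\ x = \sum_(h <- c) h.

(* H is a minimal generating set of the monoid S (= the Hilbert basis) *)
Definition hilbert_basis (r : nat) (S H : 'rV[int]_r -> Prop) : Prop :=
  (forall h, H h -> S h) /\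
  (forall x, S x <-> gen_monoid H x) /\
  (forall H' : 'rV[int]_r -> Prop, (forall h, H' h -> H h) ->
     (forall x, S x -> gen_monoid H' x) -> forall h, H h -> H' h).

From HB Require Import structures.
From mathcomp Require Import all_boot all_order all_algebra.
From mathcomp Require Import ring lra.
Import Order.TTheory GRing.Theory Num.Theory.
Local Open Scope ring_scope.
Set Implicit Arguments. Unset Strict Implicit. Unset Printing Implicit Defensive.

(* The proof combines rational linear programming duality with the
   decomposition of lattice points of the ray monoid into Hilbert basis
   elements.
   - Fourier-Motzkin elimination (section FourierMotzkin) projects a finite
     system of linear inequalities in (v, t) onto the coordinate t, keeping
     track of how each projected inequality is derived.  From it we obtain
     strong LP duality (lp_strong_duality): the minimum of <m, .> over Delta
     is attained at some v0 and equals sum_i y_i (-e_i) for rational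
     multipliers y >= 0 with sum_i y_i m_i = m.
   - Clearing denominators turns y into a lattice point s of the ray monoid
     with p(s) = D m, D > 0, whose slack sum_i s_i (e_i + <m_i, v0>) is zero
     (optimal_ray_point).  Slacks are additive and nonnegative on Delta, so
     some Hilbert basis element h0 in a decomposition of s with p(h0) != 0
     has zero slack too (tight_generator); its ratio realises the minimum,
     while nonnegativity of the slack bounds every other ratio. *)

Lemma separate (R : realDomainType) (ls us : seq R) :
  (forall l u, l \in ls -> u \in us -> l <= u) ->
  exists x, (forall l, l \in ls -> l <= x) /\ (forall u, u \in us -> x <= u).
Proof.
elim: ls => [|l ls IH] hlu.
  elim: us {hlu} => [|u us [x [_ hx]]]; first by exists 0.
  exists (Order.min x u); split=> // w; rewrite inE => /orP[/eqP->|/hx xw].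
    by rewrite ge_min lexx orbT.
  by rewrite ge_min xw.
have [x [hl hu]] : exists x, (forall l, l \in ls -> l <= x) /\
                             (forall u, u \in us -> x <= u).
  by apply: IH => l' u l'ls uus; apply: hlu; rewrite ?inE ?l'ls ?orbT.
exists (Order.max l x); split=> [w|u uus].
  rewrite inE => /orP[/eqP->|/hl wx]; first by rewrite le_max lexx.
  by rewrite le_max wx orbT.
by rewrite ge_max hu // andbT hlu // mem_head.
Qed.

Lemma seq_max (R : realDomainType) (s : seq R) :
  s != [::] -> exists2 x, x \in s & forall y, y \in s -> y <= x.
Proof.
elim: s => [//|a [|b s] IH] _.
  by exists a; rewrite ?mem_head // => y; rewrite inE => /eqP->.
have [x xs xmax] := IH isT.
have [ax|xa] := leP a x.
  exists x; first by rewrite inE xs orbT.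
  by move=> y; rewrite inE => /orP[/eqP->|/xmax].
exists a; first exact: mem_head.
by move=> y; rewrite inE => /orP[/eqP->//|/xmax yx]; rewrite (le_trans yx (ltW xa)).
Qed.

Section FourierMotzkin.
Variable n : nat.

Definition dot (a v : 'rV[rat]_n) : rat := \sum_(j < n) a 0 j * v 0 j.

Lemma dotDl a b v : dot (a + b) v = dot a v + dot b v.
Proof. by rewrite /dot -big_split; apply: eq_bigr => j _; rewrite mxE mulrDl. Qed.

Lemma dotZl c a v : dot (c *: a) v = c * dot a v.
Proof. by rewrite /dot mulr_sumr; apply: eq_bigr => j _; rewrite mxE mulrA. Qed.

Lemma dot0l v : dot 0 v = 0.
Proof. by rewrite /dot big1 // => j _; rewrite mxE mul0r. Qed.

Lemma dotNl a v : dot (- a) v = - dot a v.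
Proof. by rewrite -scaleN1r dotZl mulN1r. Qed.

Lemma dot_suml I (s : seq I) (F : I -> 'rV[rat]_n) v :
  dot (\sum_(i <- s) F i) v = \sum_(i <- s) dot (F i) v.
Proof. exact: (big_morph (fun a => dot a v) (fun a b => dotDl a b v) (dot0l v)). Qed.

(* A constraint (a, k, b) on a point v of Q^n and an extra rational
   coordinate t reads  b <= <a, v> + k t. *)
Definition cstr := ('rV[rat]_n * rat * rat)%type.

Definition sat (p : cstr) (v : 'rV[rat]_n) (t : rat) : Prop :=
  p.2 <= dot p.1.1 v + p.1.2 * t.

Definition cadd (p q : cstr) : cstr := (p.1.1 + q.1.1, p.1.2 + q.1.2, p.2 + q.2).
Definition cscale (c : rat) (p : cstr) : cstr := (c *: p.1.1, c * p.1.2, c * p.2).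

Inductive der (S : seq cstr) : cstr -> Prop :=
| der_base p : p \in S -> der S p
| der_add p q : der S p -> der S q -> der S (cadd p q)
| der_scale c p : 0 <= c -> der S p -> der S (cscale c p).

Lemma der_sound S p v t :
  der S p -> (forall q, q \in S -> sat q v t) -> sat p v t.
Proof.
move=> dp hS; elim: dp => {p} [p /hS //|p q _ hp _ hq|c p c0 _ hp].
  by rewrite /sat /= dotDl mulrDl addrACA lerD.
by move: hp; rewrite /sat /= dotZl -mulrA -mulrDr; apply: ler_wpM2l.
Qed.

Lemma der_trans S S' p : (forall q, q \in S' -> der S q) -> der S' p -> der S p.
Proof.
move=> hS' dp; elim: dp => {p} [p /hS' //|p q _ hp _ hq|c p c0 _ hp].
  exact: der_add.
exact: der_scale.
Qed.

Definition coef (p : cstr) (j : 'I_n) : rat := p.1.1 0 j.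

(* The combination of p (coefficient > 0 at j) and q (coefficient < 0 at j)
   cancelling the j-th coordinate. *)
Definition comb j (p q : cstr) : cstr :=
  cadd (cscale (- coef q j) p) (cscale (coef p j) q).

Lemma coef_comb j j' p q :
  coef (comb j p q) j' = - coef q j * coef p j' + coef p j * coef q j'.
Proof. by rewrite /coef /= !mxE. Qed.

Definition fm (S : seq cstr) j : seq cstr :=
  [seq p <- S | coef p j == 0] ++
  [seq comb j p q | p <- [seq p <- S | 0 < coef p j],
                    q <- [seq p <- S | coef p j < 0]].

Lemma fm_der S j q : q \in fm S j -> der S q.
Proof.
rewrite mem_cat => /orP[|/allpairsP[[p1 p2] [/= h1 h2 ->]]].
  by rewrite mem_filter => /andP[_ ?]; apply: der_base.
move: h1 h2; rewrite !mem_filter => /andP[c1 i1] /andP[c2 i2].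
apply: der_add; apply: der_scale; rewrite ?oppr_ge0 ?ltW //; exact: der_base.
Qed.

Lemma fm_coef S j j' q : (j' = j \/ forall p, p \in S -> coef p j' = 0) ->
  q \in fm S j -> coef q j' = 0.
Proof.
move=> hj'; rewrite mem_cat => /orP[|/allpairsP[[p1 p2] [/= h1 h2 ->]]].
  rewrite mem_filter => /andP[/eqP qj qS].
  by case: hj' => [->|/(_ q qS)].
move: h1 h2; rewrite !mem_filter => /andP[_ i1] /andP[_ i2].
rewrite coef_comb; case: hj' => [->|h0]; first by rewrite mulNr mulrC addNr.
by rewrite (h0 _ i1) (h0 _ i2) !mulr0 addr0.
Qed.

Definition upd (v : 'rV[rat]_n) j (x : rat) : 'rV[rat]_n :=
  \row_k (if k == j then x else v 0 k).

Definition rest (a v : 'rV[rat]_n) j : rat := \sum_(k < n | k != j) a 0 k * v 0 k.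

Lemma dot_upd a v j x : dot a (upd v j x) = a 0 j * x + rest a v j.
Proof.
rewrite /dot (bigD1 j) //= mxE eqxx; congr (_ + _).
by apply: eq_bigr => k /negbTE kj; rewrite mxE kj.
Qed.

Lemma dot_rest a v j : dot a v = a 0 j * v 0 j + rest a v j.
Proof. by rewrite /dot (bigD1 j). Qed.

(* Completeness of a step: a solution of fm S j extends to a solution of S
   by choosing the j-th coordinate between the induced lower and upper
   bounds, which are compatible because fm S j contains all the
   combinations comb j p q. *)
Lemma fm_lift S j v t : (forall q, q \in fm S j -> sat q v t) ->
  exists x, forall p, p \in S -> sat p (upd v j x) t.
Proof.
move=> h.
pose R (p : cstr) := rest p.1.1 v j + p.1.2 * t.
pose bnd (p : cstr) := (p.2 - R p) / coef p j.
pose P := [seq p <- S | 0 < coef p j]; pose N := [seq p <- S | coef p j < 0].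
have hlu : forall l u, l \in map bnd P -> u \in map bnd N -> l <= u.
  move=> l u /mapP[p pP ->] /mapP[q qN ->].
  have hc : comb j p q \in fm S j.
    by rewrite mem_cat; apply/orP; right; apply/allpairsP; exists (p, q).
  move: (h _ hc); rewrite /sat /comb /cadd /cscale /= dotDl !dotZl.
  move: pP qN; rewrite !mem_filter => /andP[pp _] /andP[qn _].
  rewrite !(dot_rest _ v j) /bnd ler_pdivrMr // mulrAC ler_ndivlMr // /R.
  rewrite /coef in pp qn *; nra.
have [x [hl hu]] := separate hlu.
exists x => p pS; rewrite /sat dot_upd.
have [pn|pp|pz] := ltrgtP (coef p j) 0.
- have : x <= bnd p by apply: hu; apply/mapP; exists p; rewrite // mem_filter pn.
  rewrite ler_ndivlMr // /R; rewrite /coef in pn *; nra.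
- have : bnd p <= x by apply: hl; apply/mapP; exists p; rewrite // mem_filter pp.
  rewrite ler_pdivrMr // /R; rewrite /coef in pp *; nra.
- have hq : p \in fm S j by rewrite mem_cat mem_filter pz eqxx pS.
  by have := h _ hq; rewrite /sat (dot_rest _ v j) /coef in pz *; rewrite pz !mul0r !add0r.
Qed.

Lemma fm_elim S (js : seq 'I_n) : exists S' : seq cstr,
  [/\ forall q, q \in S' -> der S q,
      forall q j, q \in S' -> j \in js -> coef q j = 0 &
      forall v t, (forall q, q \in S' -> sat q v t) ->
        exists v', forall p, p \in S -> sat p v' t].
Proof.
elim: js => [|j js [S1 [hder hcoef hlift]]].
  by exists S; split=> // [q|v t h]; [exact: der_base | exists v].
exists (fm S1 j); split.
- by move=> q /fm_der; apply: der_trans.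
- move=> q j' qS; rewrite inE => /orP[/eqP->|j'js]; first exact: (fm_coef (or_introl _) qS).
  by apply: (fm_coef _ qS); right => p pS; apply: hcoef.
- by move=> v t /fm_lift[x hx]; apply: hlift hx.
Qed.

Lemma fm_project S : exists S' : seq cstr,
  [/\ forall q, q \in S' -> der S q,
      forall q, q \in S' -> q.1.1 = 0 &
      forall t, (forall q, q \in S' -> q.2 <= q.1.2 * t) ->
        exists v, forall p, p \in S -> sat p v t].
Proof.
have [S' [hder hcoef hlift]] := fm_elim S (enum 'I_n).
have hz q : q \in S' -> q.1.1 = 0.
  by move=> qS; apply/rowP => j; rewrite mxE; apply: hcoef; rewrite ?mem_enum.
exists S'; split=> // t ht; apply: (hlift 0) => q qS.
by rewrite /sat hz // dot0l add0r; apply: ht.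
Qed.

End FourierMotzkin.

Definition feas1 (S : seq (rat * rat)) (t : rat) : Prop :=
  forall q, q \in S -> q.2 <= q.1 * t.

Lemma min_1d S (tf B : rat) : feas1 S tf -> (forall t, feas1 S t -> B <= t) ->
  exists2 q, q \in S & 0 < q.1 /\ feas1 S (q.2 / q.1).
Proof.
move=> hf hB; pose ls := [seq q.2 / q.1 | q <- S & 0 < q.1].
have [ls0|lsn] := eqVneq ls [::].
  have tmin : Order.min tf (B - 1) <= tf by rewrite ge_min lexx.
  have hmin : feas1 S (Order.min tf (B - 1)).
    move=> q qS; have kq : q.1 <= 0.
      rewrite leNgt; apply/negP => kq.
      have : q.2 / q.1 \in ls by apply: map_f; rewrite mem_filter kq.
      by rewrite ls0.
    have := hf q qS; nra.
  by have := hB _ hmin; rewrite le_min => /andP[_]; lra.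
have [ts /mapP[q]] := seq_max lsn; rewrite mem_filter => /andP[kq qS] -> tsmax.
have tstf : q.2 / q.1 <= tf by rewrite ler_pdivrMr // mulrC hf.
exists q => //; split=> // q' q'S; have [kq'|kq'] := ltrP 0 q'.1.
  have : q'.2 / q'.1 <= q.2 / q.1 by apply: tsmax; apply: map_f; rewrite mem_filter kq'.
  by rewrite ler_pdivrMr // mulrC.
have := hf q' q'S; move: tstf; set t0 := q.2 / q.1; nra.
Qed.

Section LinearProgramming.
Variables (n r : nat) (A : 'I_r -> 'rV[rat]_n) (b : 'I_r -> rat).

Definition feasible (v : 'rV[rat]_n) : Prop := forall i, b i <= dot (A i) v.

Lemma lp_weak_duality (y : 'I_r -> rat) v : (forall i, 0 <= y i) -> feasible v ->
  \sum_i y i * b i <= dot (\sum_i y i *: A i) v.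
Proof.
move=> y0 hv; rewrite dot_suml; apply: ler_sum => i _.
by rewrite dotZl ler_wpM2l.
Qed.

(* Minimising <c, v> over the polyhedron, as the system in (v, t) saying
   that v is feasible and t = <c, v>. *)
Definition lp_system (c : 'rV[rat]_n) : seq (cstr n) :=
  [seq (A i, 0, b i) | i <- enum 'I_r] ++ [:: (- c, 1, 0); (c, -1, 0)].

Lemma lp_system_sat c v t :
  (forall p, p \in lp_system c -> sat p v t) <-> feasible v /\ dot c v = t.
Proof.
split=> [h|[hv <-] p].
  split=> [i|].
    have := h (A i, 0, b i); rewrite /sat /= mul0r addr0; apply.
    by rewrite mem_cat map_f ?mem_enum.
  have h1 : sat (- c, 1, 0) v t by apply: h; rewrite mem_cat !inE eqxx orbT.
  have h2 : sat (c, -1, 0) v t by apply: h; rewrite mem_cat !inE eqxx !orbT.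
  by move: h1 h2; rewrite /sat /= dotNl; lra.
rewrite mem_cat => /orP[/mapP[i _ ->]|]; rewrite /sat /=.
  by rewrite mul0r addr0.
by rewrite !inE => /orP[/eqP->|/eqP->] /=; rewrite ?dotNl; lra.
Qed.

Lemma lp_certificate c p : der (lp_system c) p ->
  exists2 y : 'I_r -> rat, (forall i, 0 <= y i) &
    p.1.1 + p.1.2 *: c = \sum_i y i *: A i /\ p.2 = \sum_i y i * b i.
Proof.
have sum0A : \sum_i (0 : rat) *: A i = 0 by rewrite big1 // => i _; rewrite scale0r.
have sum0b : \sum_i (0 : rat) * b i = 0 by rewrite big1 // => i _; rewrite mul0r.
elim=> {p} [p|p q _ [y1 y10 [h1 h1']] _ [y2 y20 [h2 h2']]|k p k0 _ [y y0 [h h']]].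
- rewrite mem_cat => /orP[/mapP[i _ ->]|].
    exists (fun k => (k == i)%:R) => [k|/=]; first by rewrite ler0n.
    rewrite scale0r addr0; split; rewrite (bigD1 i) //= eqxx ?scale1r ?mul1r.
      by rewrite big1 ?addr0 // => k /negbTE ->; rewrite scale0r.
    by rewrite big1 ?addr0 // => k /negbTE ->; rewrite mul0r.
  rewrite !inE => /orP[] /eqP-> /=; exists (fun=> 0) => //; rewrite sum0A sum0b.
    by rewrite scale1r addNr.
  by rewrite scaleN1r subrr.
- exists (fun i => y1 i + y2 i) => [i|/=]; first by rewrite addr_ge0.
  rewrite scalerDl addrACA h1 h2 h1' h2' -!big_split /=.
  by split; apply: eq_bigr => i _; rewrite ?scalerDl ?mulrDl.
- exists (fun i => k * y i) => [i|/=]; first by rewrite mulr_ge0.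
  rewrite -scalerA -scalerDr h h' scaler_sumr mulr_sumr.
  by split; apply: eq_bigr => i _; rewrite ?scalerA ?mulrA.
Qed.

(* Fourier-Motzkin elimination projects the system
   onto t = <c, v>; the least solution of the projection is the optimum,
   and the constraint realising it carries the certificate y. *)
Lemma lp_strong_duality c : (exists v, feasible v) ->
  (exists2 a : 'I_r -> rat, (forall i, 0 <= a i) & c = \sum_i a i *: A i) ->
  exists v0 (y : 'I_r -> rat), [/\ feasible v0, forall i, 0 <= y i,
    c = \sum_i y i *: A i & dot c v0 = \sum_i y i * b i].
Proof.
move=> [vf hvf] [a a0 ca].
have [S' [hder hz hlift]] := fm_project (lp_system c).
pose S1 := [seq (q.1.2, q.2) | q <- S'].
have S1sound v : feasible v -> feas1 S1 (dot c v).
  move=> hv _ /mapP[q qS ->] /=.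
  have := der_sound (hder q qS) (proj2 (lp_system_sat c v _) (conj hv erefl)).
  by rewrite /sat hz // dot0l add0r.
have S1lift t : feas1 S1 t -> exists2 v, feasible v & dot c v = t.
  move=> ht; have [|v /lp_system_sat[]] := hlift t; last by exists v.
  by move=> q qS; apply: (ht (q.1.2, q.2)); apply: map_f.
have S1bound t : feas1 S1 t -> \sum_i a i * b i <= t.
  by move=> /S1lift[v hv <-]; rewrite ca; apply: lp_weak_duality.
have [_ /mapP[q qS ->] /= [kq /S1lift[v0 hv0 v0opt]]] := min_1d (S1sound _ hvf) S1bound.
have [y y0 [hy hy']] := lp_certificate (hder q qS).
exists v0, (fun i => y i / q.1.2); split=> [//|i||].
- by rewrite divr_ge0 // ltW.
- have kc : q.1.2 *: c = \sum_i y i *: A i by rewrite -hy hz // add0r.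
  apply: (scalerI (lt0r_neq0 kq)) => /=; rewrite kc scaler_sumr.
  by apply: eq_bigr => i _; rewrite scalerA mulrC divfK ?gt_eqF.
- by rewrite v0opt hy' mulr_suml; apply: eq_bigr => i _; rewrite mulrAC.
Qed.

End LinearProgramming.

Lemma pair_dot n (x : 'rV[int]_n) v : pair x v = dot (toQ x) v.
Proof. by apply: eq_bigr => j _; rewrite mxE. Qed.

Lemma intr_sum I (s : seq I) (F : I -> int) :
  ((\sum_(i <- s) F i)%:~R : rat) = \sum_(i <- s) (F i)%:~R.
Proof. exact: (big_morph (fun z : int => (z%:~R : rat)) (@intrD _) (mulr0z 1)). Qed.

Lemma toQ_inj n : injective (@toQ n).
Proof. by move=> x y /rowP exy; apply/rowP => j; have := exy j; rewrite !mxE => /intr_inj. Qed.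

Lemma toQZ n (k : int) (x : 'rV[int]_n) : toQ (k *: x) = k%:~R *: toQ x.
Proof. by apply/rowP => j; rewrite !mxE intrM. Qed.

Lemma toQ_pZ n r (ms : 'I_r -> 'rV[int]_n) s :
  toQ (pZ ms s) = \sum_i (s 0 i)%:~R *: toQ (ms i).
Proof.
apply/rowP => j; rewrite /toQ /pZ mxE !summxE intr_sum.
by apply: eq_bigr => i _; rewrite !mxE intrM.
Qed.

Lemma pZD n r (ms : 'I_r -> 'rV[int]_n) s1 s2 : pZ ms (s1 + s2) = pZ ms s1 + pZ ms s2.
Proof. by rewrite /pZ -big_split; apply: eq_bigr => i _; rewrite mxE scalerDl. Qed.

Lemma pZ0 n r (ms : 'I_r -> 'rV[int]_n) : pZ ms 0 = 0.
Proof. by rewrite /pZ big1 // => i _; rewrite mxE scale0r. Qed.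

Lemma sdotD r (s1 s2 : 'rV[int]_r) es : sdot (s1 + s2) es = sdot s1 es + sdot s2 es.
Proof. by rewrite /sdot -big_split; apply: eq_bigr => i _; rewrite mxE mulrDl. Qed.

Lemma sdot0 r (es : 'I_r -> int) : sdot 0 es = 0.
Proof. by rewrite /sdot big1 // => i _; rewrite mxE mul0r. Qed.

Lemma scalez_inj n (m : 'rV[int]_n) (l l' : int) : m != 0 -> l *: m = l' *: m -> l = l'.
Proof.
move=> m0 /(congr1 (@toQ n)); rewrite !toQZ => /eqP; rewrite -subr_eq0 -scalerBl.
rewrite scaler_eq0 subr_eq0 eqr_int => /orP[/eqP //|/eqP tm].
by move: m0; rewrite -(inj_eq (@toQ_inj n)) tm /toQ map_mx0 eqxx.
Qed.

(* A rational multiple of a primitive vector which is a lattice point is an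
   integral multiple: the denominator of t divides every coordinate of m. *)
Lemma primitive_multiple n (m x : 'rV[int]_n) (t : rat) : primitive m ->
  toQ x = t *: toQ m -> exists l : int, t = l%:~R.
Proof.
move=> [_ hprim] /rowP hx.
have hd (j : 'I_n) : (denq t %| m ord0 j)%Z.
  have e : denq t * x 0 j = numq t * m 0 j.
    have := hx j; rewrite !mxE => hj; apply: (@intr_inj rat).
    by rewrite !intrM hj numqE mulrCA mulrA.
  have cop : coprimez (denq t) (numq t).
    by rewrite /coprimez /gcdz gcdnC; have := coprime_num_den t.
  by rewrite -(Gauss_dvdzr _ cop) -e dvdz_mulr.
have /hprim[d1|d1] : m = denq t *: \row_j ((m ord0 j) %/ denq t)%Z.
  by apply/rowP => j; rewrite !mxE mulrC divzK.
- by exists (numq t); rewrite numqE d1 mulr1.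
- by have := denq_gt0 t; rewrite d1.
Qed.

(* Clearing denominators: a rational vector becomes integral after scaling by
   the (positive) product of the denominators of its entries. *)
Lemma clear_denominators r (y : 'I_r -> rat) :
  exists2 D : int, 0 < D & exists s : 'rV[int]_r, forall i, (s 0 i)%:~R = D%:~R * y i.
Proof.
exists (\prod_i denq (y i)); first by apply: prodr_gt0 => i _; exact: denq_gt0.
exists (\row_i (numq (y i) * \prod_(j | j != i) denq (y j))) => i.
by rewrite mxE [in RHS](bigD1 i) //= !intrM numqE [RHS]mulrC mulrA.
Qed.

Lemma psum_seq_eq0 (R : numDomainType) (T : eqType) (s : seq T) (F : T -> R) :
  (forall h, h \in s -> 0 <= F h) -> \sum_(h <- s) F h = 0 ->
  forall h, h \in s -> F h = 0.
Proof.
move=> F0 /eqP; rewrite big_seq psumr_eq0 => [/allP Fz h hs|h hs]; last exact: F0.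
by apply/eqP; apply: (implyP (Fz h hs)).
Qed.

Section RayMonoid.
Variables (n r : nat) (ms : 'I_r -> 'rV[int]_n) (es : 'I_r -> int) (m : 'rV[int]_n).
Hypothesis m_primitive : primitive m.

Lemma ray_multiple x : ray_monoid ms m x -> exists2 l : int, 0 <= l & pZ ms x = l *: m.
Proof.
move=> [_ [t [t0 ht]]]; have [l tl] := primitive_multiple m_primitive ht.
by exists l; [rewrite -(ler0z rat) -tl | apply: toQ_inj; rewrite toQZ -tl].
Qed.

Lemma ray_multiple_pos x l :
  ray_monoid ms m x -> pZ ms x != 0 -> pZ ms x = l *: m -> 0 < l.
Proof.
move=> /ray_multiple[l' l'0 xl'] x0 xl.
have -> : l = l' by apply: (scalez_inj (proj1 m_primitive)); rewrite -xl.
rewrite lt_def l'0 andbT; apply: contraNneq x0 => l'z.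
by rewrite xl' l'z scale0r.
Qed.

Definition slack (x : 'rV[int]_r) (v : 'rV[rat]_n) : rat :=
  (sdot x es)%:~R + pair (pZ ms x) v.

Lemma slack_ge0 (x : 'rV[int]_r) v :
  (forall i, 0 <= x 0 i) -> in_Delta ms es v -> 0 <= slack x v.
Proof.
move=> x0 hv; rewrite /slack pair_dot toQ_pZ.
suff : - (sdot x es)%:~R <= dot (\sum_i (x 0 i)%:~R *: toQ (ms i)) v by lra.
rewrite /sdot intr_sum -sumrN (eq_bigr (fun i => (x 0 i)%:~R * - (es i)%:~R)).
  by apply: lp_weak_duality => i; rewrite ?ler0z // -pair_dot; apply: hv.
by move=> i _; rewrite intrM mulrN.
Qed.

Lemma slack_sum (s : seq 'rV[int]_r) v :
  slack (\sum_(x <- s) x) v = \sum_(x <- s) slack x v.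
Proof.
apply: (big_morph (slack^~ v)) => [x y|].
  by rewrite /slack sdotD pZD intrD !pair_dot /toQ map_mxD dotDl addrACA.
by rewrite /slack sdot0 pZ0 pair_dot /toQ map_mx0 dot0l addr0.
Qed.

Lemma slack_multiple x l v :
  pZ ms x = l *: m -> slack x v = (sdot x es)%:~R + l%:~R * pair m v.
Proof. by move=> xl; rewrite /slack xl !pair_dot toQZ dotZl. Qed.

Lemma pair_ratio x l v : pZ ms x = l *: m -> 0 < l ->
  pair m v = slack x v / l%:~R - (sdot x es)%:~R / l%:~R.
Proof. by move=> xl l0; rewrite (slack_multiple _ xl); field; rewrite intr_eq0 gt_eqF. Qed.

Lemma optimal_ray_point : in_cone ms m -> (exists v, in_Delta ms es v) ->
  exists2 v0, in_Delta ms es v0 & exists (s : 'rV[int]_r) (D : int),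
    [/\ ray_monoid ms m s, 0 < D, pZ ms s = D *: m & slack s v0 = 0].
Proof.
move=> [a [a0 ma]] [vf hvf].
pose A i := toQ (ms i); pose b i : rat := - (es i)%:~R.
have DeltaE v : in_Delta ms es v <-> feasible A b v.
  by split=> hv i; have := hv i; rewrite /b pair_dot.
have feasA : exists v, feasible A b v by exists vf; apply/DeltaE.
have [v0 [y [/DeltaE hv0 y0 my v0val]]] :=
  lp_strong_duality feasA (ex_intro2 _ _ a a0 ma).
have [D D0 [s hs]] := clear_denominators y.
have s0 i : 0 <= s 0 i by rewrite -(ler0z rat) hs mulr_ge0 // ler0z ltW.
have pZs : pZ ms s = D *: m.
  apply: toQ_inj; rewrite toQ_pZ toQZ my scaler_sumr.
  by apply: eq_bigr => i _; rewrite hs scalerA.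
exists v0 => //; exists s, D; split=> //.
  by split=> //; exists D%:~R; rewrite ler0z ltW // -toQZ pZs.
rewrite (slack_multiple _ pZs) pair_dot v0val /sdot intr_sum mulr_sumr -big_split /=.
by rewrite big1 // => i _; rewrite intrM hs /b; ring.
Qed.

(* If p(s) is nonzero and s has zero slack at v0 in Delta, then some
   generator h0 occurring in a decomposition of s also has p(h0) nonzero
   and zero slack: slacks of generators are nonnegative and add up. *)
Lemma tight_generator (H : 'rV[int]_r -> Prop) s v0 :
  hilbert_basis (ray_monoid ms m) H -> in_Delta ms es v0 ->
  ray_monoid ms m s -> pZ ms s != 0 -> slack s v0 = 0 ->
  exists h0, [/\ H h0, pZ ms h0 != 0 & slack h0 v0 = 0].
Proof.
move=> [HS [Hgen _]] hv0 /Hgen[cs [csH ->]] pZs0 slack0.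
have tight : forall h, h \in cs -> slack h v0 = 0.
  apply: psum_seq_eq0; last by rewrite -slack_sum.
  by move=> h /csH /HS[h0 _]; apply: slack_ge0.
have [h0 h0cs pZh0] : exists2 h0, h0 \in cs & pZ ms h0 != 0.
  apply/hasP; apply: contraNT pZs0 => /hasPn pZcs0; apply/eqP.
  rewrite (big_morph (pZ ms) (pZD ms) (pZ0 ms)) big1_seq // => h hcs.
  exact/eqP/negPn/pZcs0.
by exists h0; split; [apply: csH | | apply: tight].
Qed.

End RayMonoid.

Unset Implicit Arguments.
Theorem lemma4p4p11 (n r : nat) (ms : 'I_r -> 'rV[int]_n) (es : 'I_r -> int)
  (m : 'rV[int]_n) (H : 'rV[int]_r -> Prop) :
  (forall i, ms i != 0) ->
  generates_lattice ms ->
  primitive m ->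
  in_cone ms m ->
  (exists v, in_Delta ms es v) ->
  hilbert_basis (ray_monoid ms m) H ->
  exists v0 : 'rV[rat]_n,
    in_Delta ms es v0 /\
    (forall v, in_Delta ms es v -> pair m v0 <= pair m v) /\
    exists (s0 : 'rV[int]_r) (l0 : int),
      H s0 /\ pZ ms s0 != 0 /\ pZ ms s0 = l0 *: m /\ 0 < l0 /\
      (forall (s : 'rV[int]_r) (l : int), H s -> pZ ms s != 0 -> pZ ms s = l *: m ->
         ((sdot s0 es)%:~R / l0%:~R : rat) <= (sdot s es)%:~R / l%:~R) /\
      pair m v0 = - ((sdot s0 es)%:~R / l0%:~R).
Proof.
move=> _ _ hprim hcone hDelta hH; have HS := proj1 hH.
have [v0 hv0 [s [D [sray D0 pZs slack_s]]]] := optimal_ray_point hcone hDelta.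
have pZs0 : pZ ms s != 0.
  rewrite pZs; apply/eqP => Dm0.
  have D_0 : D = 0 by apply: (scalez_inj (proj1 hprim)); rewrite Dm0 scale0r.
  by rewrite D_0 ltxx in D0.
(* A tight generator h0, p(h0) = l0 m, realises the value -<m, v0>. *)
have [h0 [Hh0 pZh0 tight]] := tight_generator hH hv0 sray pZs0 slack_s.
have [l0 _ h0l0] := ray_multiple hprim (HS h0 Hh0).
have l0pos := ray_multiple_pos hprim (HS h0 Hh0) pZh0 h0l0.
have v0val := pair_ratio es v0 h0l0 l0pos; rewrite tight mul0r sub0r in v0val.
(* Optimality of v0: the slack of s is nonnegative on all of Delta. *)
exists v0; split=> //; split.
  move=> v hv; rewrite (pair_ratio es v pZs D0) (pair_ratio es v0 pZs D0).
  rewrite slack_s mul0r lerD2r.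
  by apply: divr_ge0; [apply: slack_ge0 => //; case: sray | rewrite ler0z ltW].
(* Minimality of the ratio of h0: slacks at v0 are nonnegative. *)
exists h0, l0; do 4!split=> //; split=> // s1 l Hs1 pZs10 s1l.
have lpos := ray_multiple_pos hprim (HS s1 Hs1) pZs10 s1l.
rewrite -[_ / _]opprK -v0val (pair_ratio es v0 s1l lpos) opprB lerBlDr lerDl.
by apply: divr_ge0; [apply: slack_ge0 => //; case: (HS s1 Hs1) | rewrite ler0z ltW].
Qed.
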